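(* In any finite ELP, let $Q\in\mathcal Q$ and let $\pi$ be a policy. Put $\rho_\pi(s,a)=\rho_\pi(s)\pi(a|s)$ and $\lambda_\pi(s,a)=\rho_\pi(s,a)\mathbb E_\pi[T]$. Then $$\mathcal L_\pi(Q,\bar\lambda)\le\mathcal L_\pi(Q,\lambda_\pi)\le\mathcal L_\pi(\bar Q,\lambda_\pi)\quad\text{for all }\bar Q\in\mathcal Q,\ \bar\lambda\ge0$$ if and only if all of the following hold: (1) $\mathcal BQ(s,a)-Q(s,a)\le0$ for all $(s,a)\in\mathcal S\times\mathcal A$; (2) $\rho_\pi(s,a)\big(\mathcal BQ(s,a)-Q(s,a)\big)=0$ for all $(s,a)$; (3) $\rho_\pi(s,a)\big(\max_{\bar a}Q(s,\bar a)-Q(s,a)\big)=0$ for all $s\notin\mathcal S_\bot$ and all $a\in\mathcal A$.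
   Context: A finite ELP is $(\mathcal S,\mathcal A,P,R,\rho)$ with finite $\mathcal S,\mathcal A$, reward $R:\mathcal S\to\mathbb R$, transitions $P(s'|s,a)$, distribution $\rho$, and nonempty terminal set $\mathcal S_\bot$. Under a policy $\pi$, $S_0$ is a fixed terminal state, $A_t\sim\pi(\cdot|S_t)$, $S_{t+1}\sim P(\cdot|S_t,A_t)$, and $T=\inf\{t\ge1:S_t\in\mathcal S_\bot\}$. ELP conditions: $\mathbb E_\pi[T]<\infty$ for every $\pi$; $P(s'|s,a)=\rho(s')$ for all $s\in\mathcal S_\bot$, all $a,s'$; every state is reachable under some policy. $\mathcal Q$ = all functions $\mathcal S\times\mathcal A\to\mathbb R$; $\bar\lambda\ge0$ ranges over functions $\mathcal S\times\mathcal A\to[0,\infty)$. $\mathcal BQ(s,a)=\sum_{s'}P(s'|s,a)\big(R(s')+\mathbf 1[s'\notin\mathcal S_\bot]\max_{a'}Q(s',a')\big)$. $\mathcal L_\pi(Q,\lambda)=\mathbb E_\pi[Q(S_T,A_T)]+\sum_{s,a}\lambda(s,a)(\mathcal BQ(s,a)-Q(s,a))$ with $A_T\sim\pi(\cdot|S_T)$. $\rho_\pi(s)$ is the unique stationary distribution of the Markov chain on $\mathcal S$ with kernel $\sum_aP(s'|s,a)\pi(a|s)$. *)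

From HB Require Import structures.
From mathcomp Require Import all_boot all_order all_algebra.
From mathcomp Require Import all_classical all_reals all_analysis.
Set Implicit Arguments. Unset Strict Implicit. Unset Printing Implicit Defensive.
Import Order.TTheory GRing.Theory Num.Theory.
Import numFieldNormedType.Exports.
Local Open Scope ring_scope.

Section ELP.
Variables (R : realType) (S A : finType).

Definition is_dist (d : S -> R) : Prop :=
  (forall s, 0 <= d s) /\ \sum_s d s = 1.

(* P(s'|s,a) = P s a s' is a transition kernel *)
Definition is_kernel (P : S -> A -> S -> R) : Prop :=
  forall s a, is_dist (P s a).

(* pi(a|s) = pi s a is a (stochastic) policy *)
Definition is_policy (pi : S -> A -> R) : Prop :=
  forall s, (forall a, 0 <= pi s a) /\ \sum_a pi s a = 1.

Definition Ppi (P : S -> A -> S -> R) (pi : S -> A -> R) (s s' : S) : R :=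
  \sum_a P s a s' * pi s a.

Fixpoint state_law (P : S -> A -> S -> R) (pi : S -> A -> R) (s0 : S)
  (t : nat) : S -> R :=
  match t with
  | 0%N => fun s => if s == s0 then 1 else 0
  | t'.+1 => fun s' => \sum_s state_law P pi s0 t' s * Ppi P pi s s'
  end.

(* alive t s = Pr(S_t = s, T > t), with T = inf{t >= 1 : S_t \in Sbot} *)
Fixpoint alive (P : S -> A -> S -> R) (Sbot : {set S}) (pi : S -> A -> R)
  (s0 : S) (t : nat) : S -> R :=
  match t with
  | 0%N => fun s => if s == s0 then 1 else 0
  | t'.+1 => fun s' =>
      if s' \in Sbot then 0
      else \sum_s alive P Sbot pi s0 t' s * Ppi P pi s s'
  end.

Definition surv (P : S -> A -> S -> R) (Sbot : {set S}) (pi : S -> A -> R) (s0 : S) (t : nat) : R := \sum_s alive P Sbot pi s0 t s.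

(* Pr(T = t+1, S_T = s') *)
Definition stop_at (P : S -> A -> S -> R) (Sbot : {set S}) (pi : S -> A -> R) (s0 : S) (t : nat) (s' : S) : R :=
  if s' \in Sbot then \sum_s alive P Sbot pi s0 t s * Ppi P pi s s' else 0.

Definition ET_finite (P : S -> A -> S -> R) (Sbot : {set S}) (pi : S -> A -> R) (s0 : S) : Prop := cvgn (series (surv P Sbot pi s0)).

(* E_pi[T] = sum_{t >= 0} Pr(T > t) *)
Definition ET (P : S -> A -> S -> R) (Sbot : {set S}) (pi : S -> A -> R) (s0 : S) : R := limn (series (surv P Sbot pi s0)).

(* E_pi[Q(S_T, A_T)], A_T ~ pi(.|S_T) *)
Definition EQT (P : S -> A -> S -> R) (Sbot : {set S}) (pi : S -> A -> R) (s0 : S) (Q : S -> A -> R) : R :=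
  limn (series (fun t : nat =>
     \sum_s stop_at P Sbot pi s0 t s * (\sum_a pi s a * Q s a))).

Definition all_reachable (P : S -> A -> S -> R) (s0 : S) : Prop :=
  forall s, exists pi, is_policy pi /\ exists t, 0 < state_law P pi s0 t s.

Definition is_ELP (P : S -> A -> S -> R) (rho : S -> R) (Sbot : {set S})
  (s0 : S) : Prop :=
  [/\ is_kernel P, is_dist rho, Sbot != finset.set0 & s0 \in Sbot] /\
  [/\ (forall pi, is_policy pi -> ET_finite P Sbot pi s0),
      (forall s a s', s \in Sbot -> P s a s' = rho s')
    & all_reachable P s0].

Definition stationary (P : S -> A -> S -> R) (pi : S -> A -> R) (rhopi : S -> R) : Prop :=
  is_dist rhopi /\ forall s', \sum_s rhopi s * Ppi P pi s s' = rhopi s'.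

(* max_a f a over the (nonempty) finite action set; 0 if A is empty *)
Definition max_act (f : A -> R) : R :=
  match [pick a : A] with
  | Some a0 => \big[Num.max/f a0]_a f a
  | None => 0
  end.

Definition bellman (P : S -> A -> S -> R) (Rw : S -> R) (Sbot : {set S})
  (Q : S -> A -> R) (s : S) (a : A) : R :=
  \sum_s' P s a s' *
     (Rw s' + (if s' \in Sbot then 0 else max_act (Q s'))).

Definition lagr (P : S -> A -> S -> R) (Rw : S -> R) (Sbot : {set S}) (pi : S -> A -> R) (s0 : S) (Q lam : S -> A -> R) : R :=
  EQT P Sbot pi s0 Q
  + \sum_s \sum_a lam s a * (bellman P Rw Sbot Q s a - Q s a).

End ELP.

From HB Require Import structures.
From mathcomp Require Import all_boot all_order all_algebra.
From mathcomp Require Import all_classical all_reals all_analysis.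
From mathcomp Require Import ring lra.
Import Order.TTheory GRing.Theory Num.Theory.
Import numFieldNormedType.Exports.
Local Open Scope classical_set_scope.
Local Open Scope ring_scope.

(* Let N(s) = sum_t Pr(S_t = s, T > t) be the expected number of visits to s
   before termination: N is 1 at s0, 0 at the other terminal states, and
   N = N K_pi off S_bot.  With c = rho_pi(S_bot), the defect rho_pi - c N on
   nonterminal states is a nonnegative invariant measure of the chain killed at
   S_bot, so its support is a closed set of nonterminal states; a policy that
   reaches this set and then follows pi would survive forever with positive
   probability, contradicting E[T] < oo.  Hence N K_pi = E_pi[T] rho_pi, and
   with it the Lagrangian at lambda_pi becomes
     E_pi[T] (sum_s rho_pi(s) R(s)
              + sum_{s not in S_bot} sum_a rho_pi(s,a) (max Qbar(s,.) - Qbar(s,a))).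
   The last sum is a nonnegative gap vanishing for action-independent Qbar, which
   gives (3); maximising the linear function of lambda >= 0 gives (1)-(2). *)

Lemma cvg_sum {R : realType} {I : finType} (P : pred I) (u : I -> nat -> R) (l : I -> R) :
  (forall i, P i -> u i n @[n --> \oo] --> l i) ->
  (\sum_(i | P i) u i n) @[n --> \oo] --> \sum_(i | P i) l i.
Proof. by move=> ul; apply: cvg_big => //; exact: add_continuous. Qed.

Lemma ler_sum_term {R : numDomainType} {I : finType} {F : I -> R} i :
  (forall j, 0 <= F j) -> F i <= \sum_j F j.
Proof. by move=> F0; rewrite (bigD1 i) //= lerDl sumr_ge0. Qed.

Lemma mulr_gt0_split {R : numDomainType} {x y : R} :
  0 <= x -> 0 <= y -> 0 < x * y -> 0 < x /\ 0 < y.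
Proof.
by move=> x0 y0; rewrite !lt0r x0 y0 mulf_eq0 negb_or !andbT => /andP[/andP[]].
Qed.

Lemma sum_gt0_exists {R : numDomainType} {I : finType} {F : I -> R} :
  (forall i, 0 <= F i) -> 0 < \sum_i F i -> exists i, 0 < F i.
Proof.
move=> F0 /gt_eqF/negbT/eqP/(psumr_neq0P (fun i _ => F0 i))[i /andP[_ Fi]].
by exists i.
Qed.

Lemma nonneg_multipliers_maxP {R : realFieldType} {I : finType} (w d : I -> R) :
  (forall i, 0 <= w i) ->
  (forall lam : I -> R, (forall i, 0 <= lam i) ->
     \sum_i lam i * d i <= \sum_i w i * d i)
  <-> (forall i, d i <= 0) /\ (forall i, w i * d i = 0).
Proof.
move=> w0; split => [lam_max|[d_le0 wd0] lam lam0]; last first.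
  rewrite [X in _ <= X]big1 => [|i _]; last exact: wd0.
  by apply: sumr_le0 => i _; rewrite mulr_ge0_le0.
have d_le0 i : d i <= 0.
  rewrite leNgt; apply/negP => di_gt0.
  set X := \sum_j w j * d j.
  pose lam j := if j == i then (`|X| + 1) / d i else 0.
  have lam0 j : 0 <= lam j by rewrite /lam; case: eqP => // _; rewrite divr_ge0 ?ltW.
  have := lam_max lam lam0; rewrite (bigD1 i) //= big1 => [|j /negbTE ji].
    by rewrite /lam eqxx divfK ?gt_eqF // addr0 leNgt (le_lt_trans (ler_norm X)) ?ltrDl.
  by rewrite /lam ji mul0r.
have wd_le0 i : w i * d i <= 0 by rewrite mulr_ge0_le0.
have sum_wd0 : \sum_i w i * d i = 0.
  apply/eqP; rewrite eq_le sumr_le0 //=.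
  by have := lam_max (fun=> 0) (fun=> lexx 0); rewrite big1 // => i _; rewrite mul0r.
split=> // i; apply: oppr_inj; rewrite oppr0.
apply: (psumr_eq0P (P := predT) (F := fun i => - (w i * d i))) => // [j _|].
  by rewrite oppr_ge0.
by rewrite sumrN sum_wd0 oppr0.
Qed.

Section MaxAct.
Context {R : realType} {A : finType}.

Lemma le_max_act (f : A -> R) a : f a <= max_act f.
Proof.
rewrite /max_act; case: pickP => [a0 _|/(_ a)//].
by rewrite (bigD1 a) //= le_max lexx.
Qed.

Lemma max_act_cst (k : R) (a : A) : max_act (fun _ : A => k) = k.
Proof.
rewrite /max_act; case: pickP => [a0 _|/(_ a)//].
by apply: (big_ind (eq^~ k)) => // x y -> ->; rewrite maxxx.
Qed.

End MaxAct.

Section PolicyKernel.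
Context {R : realType} {S A : finType} {P : S -> A -> S -> R} {rho : S -> R}.
Context {Sbot : {set S}} {s0 : S} {sg : S -> A -> R}.
Hypothesis hP : is_kernel P.
Hypothesis hterm : forall s a s', s \in Sbot -> P s a s' = rho s'.
Hypothesis hsg : is_policy sg.

Local Notation K := (Ppi P sg).

Lemma Ppi_ge0 s s' : 0 <= K s s'.
Proof. by apply: sumr_ge0 => a _; rewrite mulr_ge0 ?(proj1 (hP s a)) ?(proj1 (hsg s)). Qed.

Lemma Ppi_sum1 s : \sum_s' K s s' = 1.
Proof.
rewrite /Ppi exchange_big /= -(proj2 (hsg s)); apply: eq_bigr => a _.
by rewrite -mulr_suml (proj2 (hP s a)) mul1r.
Qed.

Lemma Ppi_terminal s s' : s \in Sbot -> K s s' = rho s'.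
Proof.
move=> sbot; rewrite /Ppi; under eq_bigr do rewrite hterm //.
by rewrite -mulr_sumr (proj2 (hsg s)) mulr1.
Qed.

Lemma sum_Ppi_split (v : S -> R) s' :
  \sum_x v x * K x s' =
  \sum_(x | x \notin Sbot) v x * K x s' + (\sum_(x in Sbot) v x) * rho s'.
Proof.
rewrite (bigID (mem Sbot)) /= addrC mulr_suml; congr (_ + _).
by apply: eq_bigr => x xbot; rewrite Ppi_terminal.
Qed.

Lemma aliveS t s' : alive P Sbot sg s0 t.+1 s' =
  if s' \in Sbot then 0 else \sum_s alive P Sbot sg s0 t s * K s s'.
Proof. by []. Qed.

Lemma alive_ge0 t s : 0 <= alive P Sbot sg s0 t s.
Proof.
elim: t s => [|t IH] s /=; first by case: eqP.
by case: ifP => // _; apply: sumr_ge0 => x _; rewrite mulr_ge0 ?Ppi_ge0.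
Qed.

Lemma state_law_ge0 t s : 0 <= state_law P sg s0 t s.
Proof.
elim: t s => [|t IH] s /=; first by case: eqP.
by apply: sumr_ge0 => x _; rewrite mulr_ge0 ?Ppi_ge0.
Qed.

End PolicyKernel.

Section ELP.
Context {R : realType} {S A : finType} {P : S -> A -> S -> R} {rho : S -> R}.
Context {Sbot : {set S}} {s0 : S}.
Hypothesis hP : is_kernel P.
Hypothesis hterm : forall s a s', s \in Sbot -> P s a s' = rho s'.
Hypothesis hs0 : s0 \in Sbot.
Hypothesis hreach : all_reachable P s0.
Hypothesis hfin : forall sg, is_policy sg -> ET_finite P Sbot sg s0.

Lemma alive_pos_of_state_law_pos {sg t s} : is_policy sg ->
  0 < state_law P sg s0 t s -> s \notin Sbot -> exists k, 0 < alive P Sbot sg s0 k s.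
Proof.
move=> hsg; have K_ge0 := Ppi_ge0 hP hsg.
have law_ge0 t' y : 0 <= state_law P sg s0 t' y := state_law_ge0 hP hsg t' y.
have al_ge0 t' y : 0 <= alive P Sbot sg s0 t' y := alive_ge0 hP hsg t' y.
elim: t s => [|t IH] s /=.
  by case: eqP => [->|]; [rewrite hs0 | rewrite ltxx].
move=> /(sum_gt0_exists (fun x => mulr_ge0 (law_ge0 _ _) (K_ge0 _ _))).
move=> [x /(mulr_gt0_split (law_ge0 _ _) (K_ge0 _ _))[lawx Kxs]] snbot.
case: (boolP (x \in Sbot)) => [xbot|xnbot].
  exists 1%N; rewrite aliveS (negbTE snbot).
  apply: lt_le_trans (ler_sum_term s0 (fun y => mulr_ge0 (al_ge0 _ _) (K_ge0 _ _))).
  by rewrite /= eqxx mul1r (Ppi_terminal hterm hsg _ _ hs0) -(Ppi_terminal hterm hsg _ _ xbot).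
have [k alivex] := IH x lawx xnbot; exists k.+1; rewrite aliveS (negbTE snbot).
apply: lt_le_trans (ler_sum_term x (fun y => mulr_ge0 (al_ge0 _ _) (K_ge0 _ _))).
exact: mulr_gt0.
Qed.

Section ClosedSet.
Variables (pi : S -> A -> R) (C : pred S).
Hypothesis hpi : is_policy pi.
Hypothesis C_nonterminal : forall {x}, C x -> x \notin Sbot.
Hypothesis C_closed : forall x, C x -> \sum_(y | C y) Ppi P pi x y = 1.

(* Follow [pj] until [C] is entered, then [pi], under which [C] is never left. *)
Let mix (pj : S -> A -> R) x a := if C x then pi x a else pj x a.

Let mix_policy {pj} : is_policy pj -> is_policy (mix pj).
Proof. by move=> hpj x; rewrite /mix; case: (C x). Qed.

Let Ppi_mix pj x y : Ppi P (mix pj) x y = if C x then Ppi P pi x y else Ppi P pj x y.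
Proof. by rewrite /Ppi /mix; case: (C x). Qed.

Lemma state_law_mix_pos {pj t s} : is_policy pj -> 0 < state_law P pj s0 t s ->
  (exists k c, C c /\ 0 < state_law P (mix pj) s0 k c) \/
  0 < state_law P (mix pj) s0 t s.
Proof.
move=> hpj; have hmix := mix_policy hpj.
have K_ge0 := Ppi_ge0 hP hpj.
have law_ge0 t' y : 0 <= state_law P pj s0 t' y := state_law_ge0 hP hpj t' y.
elim: t s => [|t IH] s /=; first by right.
move=> /(sum_gt0_exists (fun x => mulr_ge0 (law_ge0 _ _) (K_ge0 _ _))).
move=> [x /(mulr_gt0_split (law_ge0 _ _) (K_ge0 _ _))[lawx Kxs]].
have [|mix_lawx] := IH x lawx; first by left.
case: (boolP (C x)) => Cx; first by left; exists t, x.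
right; apply: lt_le_trans (ler_sum_term x _).
  by rewrite Ppi_mix (negbTE Cx) mulr_gt0.
by move=> y; rewrite mulr_ge0 ?(state_law_ge0 hP hmix) ?(Ppi_ge0 hP hmix).
Qed.

Lemma alive_mix_closed_mono {pj} m : is_policy pj ->
  \sum_(y | C y) alive P Sbot (mix pj) s0 m y <=
  \sum_(y | C y) alive P Sbot (mix pj) s0 m.+1 y.
Proof.
move=> hpj; have hmix := mix_policy hpj.
set al := alive P Sbot (mix pj) s0.
have -> : \sum_(y | C y) al m y = \sum_(y | C y) \sum_(x | C x) al m x * Ppi P pi x y.
  rewrite exchange_big /=; apply: eq_bigr => x Cx.
  by rewrite -mulr_sumr C_closed // mulr1.
apply: ler_sum => y Cy; rewrite /al aliveS (negbTE (C_nonterminal Cy)).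
rewrite [X in _ <= X](bigID C) /= -[X in X <= _]addr0 lerD //.
  by apply: ler_sum => x Cx; rewrite Ppi_mix Cx.
by apply: sumr_ge0 => x _; rewrite mulr_ge0 ?(alive_ge0 hP hmix) ?(Ppi_ge0 hP hmix).
Qed.

Lemma closed_nonterminal_empty x : ~~ C x.
Proof.
apply/negP => Cx; have [pj [hpj [t lawx]]] := hreach x.
have hmix := mix_policy hpj.
have [k [c [Cc lawc]]] : exists k c, C c /\ 0 < state_law P (mix pj) s0 k c.
  by case: (state_law_mix_pos hpj lawx) => // ?; exists t, x.
have [k' alivec] := alive_pos_of_state_law_pos hmix lawc (C_nonterminal Cc).
set al := alive P Sbot (mix pj) s0.
have al_ge0 n y : 0 <= al n y by apply: (alive_ge0 hP hmix).
have mass_mono n : al k' c <= \sum_(y | C y) al (n + k')%N y.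
  elim: n => [|n IH]; last exact: le_trans IH (alive_mix_closed_mono _ hpj).
  by rewrite (bigD1 c) //= lerDl sumr_ge0.
have surv0 := cvg_series_cvg_0 (hfin _ hmix).
have : al k' c <= 0.
  rewrite -(cvg_lim _ surv0) //; apply: (limr_ge (cvgP _ surv0)); near=> n.
  have k'n : (k' <= n)%N by near: n; exact: nbhs_infty_ge.
  rewrite -(subnK k'n); apply: le_trans (mass_mono (n - k')%N) _.
  by rewrite [X in _ <= X](bigID C) /= lerDl sumr_ge0.
by rewrite leNgt alivec.
Unshelve. all: by end_near.
Qed.

End ClosedSet.

Section StationaryPolicy.
Variables (pi : S -> A -> R) (rhopi : S -> R).
Hypothesis hpi : is_policy pi.
Hypothesis hst : stationary P pi rhopi.

Local Notation K := (Ppi P pi).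
Local Notation ET := (ET P Sbot pi s0).
Local Notation alive_at s := (fun t => alive P Sbot pi s0 t s).

Lemma series_alive_succ s n : s \notin Sbot ->
  series (alive_at s) n.+1 = \sum_x series (alive_at x) n * K x s.
Proof.
move=> snbot; have s_neq_s0 : (s == s0) = false.
  by apply: contraNF snbot => /eqP->.
rewrite seriesEnat /= big_nat_recl // [alive _ _ _ _ 0 s]/= s_neq_s0 add0r.
under eq_bigr do rewrite aliveS (negbTE snbot).
by rewrite exchange_big; apply: eq_bigr => x _; rewrite seriesEnat mulr_suml.
Qed.

Lemma sum_series_alive_terminal n : \sum_(x in Sbot) series (alive_at x) n.+1 = 1.
Proof.
have series_alive_terminal x : x \in Sbot -> series (alive_at x) n.+1 = (x == s0)%:R.
  move=> xbot; rewrite seriesEnat /= big_nat_recl // big1 ?addr0 => [|t _].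
    by rewrite /=; case: eqP.
  by rewrite aliveS xbot.
rewrite (eq_bigr _ series_alive_terminal) (bigD1 s0) //= eqxx.
by rewrite big1 ?addr0 // => x /andP[_ /negbTE->].
Qed.

Definition visits s := limn (series (alive_at s)).

Lemma cvg_visits s : series (alive_at s) @ \oo --> visits s.
Proof.
suff : cvgn (series (alive_at s)) by [].
apply: (series_le_cvg _ _ _ (hfin _ hpi)) => t; first exact: alive_ge0.
  by apply: sumr_ge0 => x _; apply: alive_ge0.
by apply: ler_sum_term => x; apply: alive_ge0.
Qed.

Lemma visits_ge0 s : 0 <= visits s.
Proof.
apply: (limr_ge (cvgP _ (cvg_visits s))); near=> n.
by apply: sumr_ge0 => t _; apply: alive_ge0.
Unshelve. all: by end_near.
Qed.

Lemma cvg_sum_partial_visits (f : S -> R) :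
  (\sum_x series (alive_at x) n * f x) @[n --> \oo] --> \sum_x visits x * f x.
Proof. by apply: cvg_sum => x _; apply: cvgMr_tmp; apply: cvg_visits. Qed.

Lemma series_alive_weighted (f : S -> R) n :
  series (fun t => \sum_x alive P Sbot pi s0 t x * f x) n =
  \sum_x series (alive_at x) n * f x.
Proof.
rewrite seriesEnat /= exchange_big; apply: eq_bigr => x _.
by rewrite seriesEnat mulr_suml.
Qed.

Lemma visits_nonterminal s : s \notin Sbot -> visits s = \sum_x visits x * K x s.
Proof.
move=> snbot; apply: cvg_unique (cvg_visits s) _ => //=.
rewrite -cvg_shiftS /=; under eq_cvg do rewrite series_alive_succ //.
exact: cvg_sum_partial_visits.
Qed.

Lemma sum_visits_terminal : \sum_(x in Sbot) visits x = 1.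
Proof.
have := cvg_sum (mem Sbot) _ _ (fun x _ => cvg_visits x).
rewrite -cvg_shiftS /=; under eq_cvg do rewrite sum_series_alive_terminal.
by move/cvg_lim => <- //; rewrite lim_cst.
Qed.

Lemma ET_sum_visits : ET = \sum_s visits s.
Proof.
apply: cvg_lim => //.
have -> : series (surv P Sbot pi s0) = fun n => \sum_x series (alive_at x) n.
  apply/funext => n; rewrite seriesEnat /= exchange_big.
  by apply: eq_bigr => x _; rewrite seriesEnat.
by apply: cvg_sum => x _; apply: cvg_visits.
Qed.

Lemma EQT_visits (Qb : S -> A -> R) : EQT P Sbot pi s0 Qb =
  \sum_(s' in Sbot) (\sum_x visits x * K x s') * \sum_a pi s' a * Qb s' a.
Proof.
set v := fun s' => \sum_a pi s' a * Qb s' a.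
apply: cvg_lim => //.
have -> : (fun t => \sum_s stop_at P Sbot pi s0 t s * v s) =
          fun t => \sum_x alive P Sbot pi s0 t x * \sum_(s' in Sbot) K x s' * v s'.
  apply/funext => t; rewrite (bigID (mem Sbot)) /= [X in _ + X]big1 ?addr0; last first.
    by move=> s' /negbTE s'nbot; rewrite /stop_at s'nbot mul0r.
  under eq_bigr => s' s'bot do rewrite /stop_at s'bot mulr_suml.
  rewrite exchange_big; apply: eq_bigr => x _; rewrite mulr_sumr.
  by apply: eq_bigr => s' _; rewrite mulrA.
under eq_cvg do rewrite series_alive_weighted.
suff -> : \sum_(s' in Sbot) (\sum_x visits x * K x s') * v s' =
          \sum_x visits x * \sum_(s' in Sbot) K x s' * v s'.
  exact: cvg_sum_partial_visits.
under eq_bigr do rewrite mulr_suml.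
rewrite exchange_big; apply: eq_bigr => x _; rewrite mulr_sumr.
by apply: eq_bigr => s' _; rewrite mulrA.
Qed.

Definition terminal_mass := \sum_(x in Sbot) rhopi x.

Lemma rhopi_ge0 s : 0 <= rhopi s.
Proof. exact: (proj1 (proj1 hst)). Qed.

Lemma rhopi_split s' :
  rhopi s' = \sum_(x | x \notin Sbot) rhopi x * K x s' + terminal_mass * rho s'.
Proof. by rewrite -[LHS](proj2 hst) (sum_Ppi_split hterm hpi). Qed.

Lemma scaled_partial_visits_le n s : s \notin Sbot ->
  terminal_mass * series (alive_at s) n.+1 <= rhopi s.
Proof.
elim: n s => [|n IH] s snbot; rewrite series_alive_succ //.
  rewrite big1 ?mulr0 ?rhopi_ge0 // => x _.
  by rewrite seriesEnat /= big_geq // mul0r.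
rewrite (sum_Ppi_split hterm hpi) sum_series_alive_terminal mul1r [leRHS]rhopi_split.
rewrite mulrDr mulr_sumr lerD //; apply: ler_sum => x xnbot.
by rewrite mulrA ler_wpM2r ?(Ppi_ge0 hP hpi) ?IH.
Qed.

Lemma scaled_visits_le s : s \notin Sbot -> terminal_mass * visits s <= rhopi s.
Proof.
move=> snbot.
have cvg_scaled : (terminal_mass * series (alive_at s) n.+1) @[n --> \oo] -->
                  terminal_mass * visits s.
  by apply: cvgMl_tmp; rewrite (cvg_shiftS (series (alive_at s))); apply: cvg_visits.
rewrite -(cvg_lim _ cvg_scaled) //; apply: (limr_le (cvgP _ cvg_scaled)).
by near=> n; apply: scaled_partial_visits_le.
Unshelve. all: by end_near.
Qed.

Definition visit_defect s := if s \in Sbot then 0 else rhopi s - terminal_mass * visits s.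

Lemma visit_defect_ge0 s : 0 <= visit_defect s.
Proof. by rewrite /visit_defect; case: ifPn => // snbot; rewrite subr_ge0 scaled_visits_le. Qed.

Lemma visit_defect_invariant s' : s' \notin Sbot ->
  visit_defect s' = \sum_x visit_defect x * K x s'.
Proof.
move=> s'nbot; rewrite /visit_defect (negbTE s'nbot).
rewrite {1}rhopi_split visits_nonterminal // (sum_Ppi_split hterm hpi visits).
rewrite sum_visits_terminal mul1r [RHS](bigID (mem Sbot)) /= [in RHS]big1 ?add0r; last first.
  by move=> x ->; rewrite mul0r.
under [RHS]eq_bigr => x /negbTE-> do rewrite mulrBl -mulrA.
by rewrite sumrB -mulr_sumr; ring.
Qed.

Lemma visit_defect_terminal s : s \in Sbot -> visit_defect s = 0.
Proof. by rewrite /visit_defect => ->. Qed.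

Lemma visit_defect_row x : 0 < visit_defect x -> \sum_(y | y \notin Sbot) K x y = 1.
Proof.
move=> defx.
have row_le1 x' : \sum_(y | y \notin Sbot) K x' y <= 1.
  rewrite -(Ppi_sum1 hP hpi x') [leRHS](bigID (mem Sbot)) /= lerDr.
  by apply: sumr_ge0 => y _; apply: Ppi_ge0.
have defect_balance : \sum_x' visit_defect x' * (1 - \sum_(y | y \notin Sbot) K x' y) = 0.
  under eq_bigr do rewrite mulrBr mulr1 mulr_sumr.
  rewrite sumrB exchange_big /= (bigID (mem Sbot)) /= big1 ?add0r.
    by apply/eqP; rewrite subr_eq0; apply/eqP/eq_bigr => y /visit_defect_invariant.
  exact: visit_defect_terminal.
have term_ge0 x' (_ : true) :
    0 <= visit_defect x' * (1 - \sum_(y | y \notin Sbot) K x' y).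
  by rewrite mulr_ge0 ?visit_defect_ge0 ?subr_ge0.
move: (psumr_eq0P term_ge0 defect_balance (i := x) isT) => /eqP.
by rewrite mulf_eq0 subr_eq0 gt_eqF //= => /eqP.
Qed.

Lemma visit_defect_support_closed x : 0 < visit_defect x ->
  \sum_(y | 0 < visit_defect y) K x y = 1.
Proof.
move=> defx; have K_ge0 := Ppi_ge0 hP hpi.
have defect_pos y : 0 < K x y -> 0 < visit_defect y.
  move=> Kxy; have ynbot : y \notin Sbot.
    have to_bot0 : \sum_(y in Sbot) K x y = 0.
      by move: (Ppi_sum1 hP hpi x); rewrite (bigID (mem Sbot)) /= visit_defect_row //; lra.
    apply: contraTN Kxy => ybot.
    by rewrite (psumr_eq0P (fun y _ => K_ge0 x y) to_bot0 ybot) ltxx.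
  rewrite visit_defect_invariant //; apply: lt_le_trans (ler_sum_term x _).
    exact: mulr_gt0.
  by move=> x'; rewrite mulr_ge0 ?visit_defect_ge0.
rewrite -(Ppi_sum1 hP hpi x) [RHS](bigID (fun y => 0 < visit_defect y)) /=.
rewrite [X in _ = _ + X]big1 ?addr0 // => y /negP ndef.
by apply/eqP; rewrite eq_le K_ge0 andbT leNgt; apply/negP => /defect_pos.
Qed.

Lemma visit_defect_eq0 s : visit_defect s = 0.
Proof.
have C_nonterminal y : 0 < visit_defect y -> y \notin Sbot.
  by apply: contraTN => ybot; rewrite visit_defect_terminal ?ltxx.
have := closed_nonterminal_empty pi [pred y | 0 < visit_defect y] hpi C_nonterminal
  visit_defect_support_closed s.
by rewrite /= lt0r visit_defect_ge0 andbT negbK => /eqP.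
Qed.

Lemma rhopi_eq_scaled_flow s' : rhopi s' = terminal_mass * \sum_x visits x * K x s'.
Proof.
rewrite rhopi_split (sum_Ppi_split hterm hpi visits) sum_visits_terminal mul1r.
rewrite mulrDr mulr_sumr; congr (_ + _); apply: eq_bigr => x xnbot.
move: (visit_defect_eq0 x); rewrite /visit_defect (negbTE xnbot) => /eqP.
by rewrite subr_eq0 mulrA => /eqP->.
Qed.

Lemma terminal_mass_ET : terminal_mass * ET = 1.
Proof.
rewrite ET_sum_visits -(proj2 (proj1 hst)).
under [RHS]eq_bigr do rewrite rhopi_eq_scaled_flow.
rewrite -mulr_sumr exchange_big /=; congr (_ * _); apply: eq_bigr => x _.
by rewrite -mulr_sumr Ppi_sum1 ?mulr1.
Qed.

Lemma visits_flow s' : \sum_x visits x * K x s' = ET * rhopi s'.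
Proof. by rewrite rhopi_eq_scaled_flow mulrA (mulrC ET) terminal_mass_ET mul1r. Qed.

Lemma ET_gt0 : 0 < ET.
Proof.
rewrite lt0r ET_sum_visits sumr_ge0 ?andbT => [|s _]; last exact: visits_ge0.
apply/eqP => visits0; move: terminal_mass_ET.
by rewrite ET_sum_visits visits0 mulr0 => /eqP; rewrite eq_sym oner_eq0.
Qed.

Local Notation lampi := (fun s a => rhopi s * pi s a * ET).

Lemma stationary_sum_Ppi (f : S -> R) :
  \sum_s rhopi s * \sum_s' K s s' * f s' = \sum_s rhopi s * f s.
Proof.
under eq_bigr do rewrite mulr_sumr.
rewrite exchange_big /=; apply: eq_bigr => s' _.
by rewrite -(proj2 hst s') mulr_suml; apply: eq_bigr => x _; rewrite mulrA.
Qed.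

Lemma sum_pi_bellman (Rw : S -> R) (Qb : S -> A -> R) s :
  \sum_a pi s a * bellman P Rw Sbot Qb s a =
  \sum_s' K s s' * (Rw s' + (if s' \in Sbot then 0 else max_act (Qb s'))).
Proof.
under eq_bigr do rewrite mulr_sumr.
rewrite exchange_big /=; apply: eq_bigr => s' _.
by rewrite mulr_suml; apply: eq_bigr => a _; rewrite mulrA (mulrC (pi s a)).
Qed.

Lemma lagr_lampi (Rw : S -> R) (Qb : S -> A -> R) :
  lagr P Rw Sbot pi s0 Qb lampi =
  ET * (\sum_s rhopi s * Rw s +
        \sum_(s | s \notin Sbot) \sum_a rhopi s * pi s a * (max_act (Qb s) - Qb s a)).
Proof.
set v := fun s => \sum_a pi s a * Qb s a.
have EQT_eq : EQT P Sbot pi s0 Qb = ET * \sum_(s in Sbot) rhopi s * v s.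
  by rewrite EQT_visits mulr_sumr; apply: eq_bigr => s _; rewrite visits_flow mulrA.
have multiplier_eq : \sum_s \sum_a lampi s a * (bellman P Rw Sbot Qb s a - Qb s a) =
    ET * (\sum_s rhopi s * (Rw s + (if s \in Sbot then 0 else max_act (Qb s))) -
          \sum_s rhopi s * v s).
  rewrite -stationary_sum_Ppi; under [in RHS]eq_bigr do rewrite -sum_pi_bellman.
  rewrite -sumrB mulr_sumr; apply: eq_bigr => s _.
  by rewrite -mulrBr -sumrB !mulr_sumr; apply: eq_bigr => a _; ring.
have gap_eq s : rhopi s * (max_act (Qb s) - v s) =
    \sum_a rhopi s * pi s a * (max_act (Qb s) - Qb s a).
  rewrite mulrBr /v mulr_sumr -[X in X - _]mulr1 -(proj2 (hpi s)) !mulr_sumr -sumrB.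
  by apply: eq_bigr => a _; ring.
rewrite /lagr EQT_eq multiplier_eq -!mulrDr; congr (_ * _).
under [X in _ = _ + X]eq_bigr do rewrite -gap_eq mulrBr.
have split_reward : \sum_s rhopi s * (Rw s + (if s \in Sbot then 0 else max_act (Qb s))) =
    \sum_s rhopi s * Rw s + \sum_(s | s \notin Sbot) rhopi s * max_act (Qb s).
  under eq_bigr do rewrite mulrDr; rewrite big_split /=; congr (_ + _).
  rewrite (bigID (mem Sbot)) /= big1 ?add0r => [|s ->]; last by rewrite mulr0.
  by apply: eq_bigr => s /negbTE->.
by rewrite split_reward sumrB [X in _ - X](bigID (mem Sbot)) /=; ring.
Qed.

Lemma lagr_multiplier_maxP (Rw : S -> R) (Q : S -> A -> R) :
  (forall lambar : S -> A -> R, (forall s a, 0 <= lambar s a) ->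
     lagr P Rw Sbot pi s0 Q lambar <= lagr P Rw Sbot pi s0 Q lampi) <->
  (forall s a, bellman P Rw Sbot Q s a - Q s a <= 0) /\
  (forall s a, rhopi s * pi s a * (bellman P Rw Sbot Q s a - Q s a) = 0).
Proof.
set d := fun p : S * A => bellman P Rw Sbot Q p.1 p.2 - Q p.1 p.2.
have lagr_pair lam : lagr P Rw Sbot pi s0 Q lam =
    EQT P Sbot pi s0 Q + \sum_p lam p.1 p.2 * d p by rewrite /lagr pair_bigA.
have lampi_ge0 (p : S * A) : 0 <= lampi p.1 p.2.
  by rewrite !mulr_ge0 ?rhopi_ge0 ?(proj1 (hpi _)) ?ltW ?ET_gt0.
have lampi_d0 s a : (lampi s a * d (s, a) = 0) <-> (rhopi s * pi s a * d (s, a) = 0).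
  rewrite mulrAC; split => [/eqP|->]; last exact: mul0r.
  by rewrite mulf_eq0 (gt_eqF ET_gt0) orbF => /eqP.
split => [lam_max | [d_le0 wd0] lambar lambar0].
  have [d_le0 wd0] : (forall p, d p <= 0) /\ (forall p, lampi p.1 p.2 * d p = 0).
    apply/(nonneg_multipliers_maxP _ _ lampi_ge0) => lam lam0.
    move: (lam_max (fun s a => lam (s, a)) (fun s a => lam0 (s, a))).
    by rewrite !lagr_pair lerD2l (eq_bigr (fun p => lam p * d p)) // => -[].
  by split=> s a; [exact: (d_le0 (s, a)) | apply/lampi_d0/(wd0 (s, a))].
rewrite !lagr_pair lerD2l.
apply: (proj2 (nonneg_multipliers_maxP _ _ lampi_ge0)) => [|[s a]]; last exact: lambar0.
by split=> -[s a]; [exact: d_le0 | apply/lampi_d0/wd0].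
Qed.

Lemma lagr_Q_minP (Rw : S -> R) (Q : S -> A -> R) :
  (forall Qbar : S -> A -> R,
     lagr P Rw Sbot pi s0 Q lampi <= lagr P Rw Sbot pi s0 Qbar lampi) <->
  (forall s, s \notin Sbot -> forall a, rhopi s * pi s a * (max_act (Q s) - Q s a) = 0).
Proof.
have gap_ge0 (Qb : S -> A -> R) s a : 0 <= rhopi s * pi s a * (max_act (Qb s) - Qb s a).
  by rewrite !mulr_ge0 ?rhopi_ge0 ?(proj1 (hpi _)) ?subr_ge0 ?le_max_act.
have gap_sum_ge0 (Qb : S -> A -> R) :
    0 <= \sum_(s | s \notin Sbot) \sum_a rhopi s * pi s a * (max_act (Qb s) - Qb s a).
  by apply: sumr_ge0 => s _; apply: sumr_ge0.
split => [Q_min | gap0 Qbar]; last first.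
  rewrite !lagr_lampi ler_pM2l ?ET_gt0 // lerD2l; apply: le_trans (gap_sum_ge0 Qbar).
  by rewrite big1 // => s snbot; rewrite big1 // => a _; apply: gap0.
pose Qbar (z : S) (_ : A) := max_act (Q z).
have gap_Qbar0 : \sum_(s | s \notin Sbot) \sum_a rhopi s * pi s a *
    (max_act (Qbar s) - Qbar s a) = 0.
  by apply: big1 => s _; apply: big1 => a _; rewrite /Qbar /= (max_act_cst _ a) subrr mulr0.
move: (Q_min Qbar); rewrite !lagr_lampi ler_pM2l ?ET_gt0 // lerD2l gap_Qbar0 => gap_le0.
have gap0 : \sum_(s | s \notin Sbot) \sum_a rhopi s * pi s a * (max_act (Q s) - Q s a) = 0.
  by apply/eqP; rewrite eq_le gap_le0 gap_sum_ge0.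
move=> s snbot a; have := psumr_eq0P (fun s _ => sumr_ge0 _ (fun a _ => gap_ge0 Q s a)) gap0 snbot.
by move/(psumr_eq0P (fun a _ => gap_ge0 Q s a)); apply.
Qed.

End StationaryPolicy.
End ELP.

Theorem mainTheorem7 (R : realType) (S A : finType)
  (P : S -> A -> S -> R) (Rw : S -> R) (rho : S -> R) (Sbot : {set S})
  (s0 : S)
  (hELP : is_ELP P rho Sbot s0)
  (pi : S -> A -> R) (hpi : is_policy pi)
  (rhopi : S -> R) (hst : stationary P pi rhopi)
  (Q : S -> A -> R) :
  let lampi := fun s a => rhopi s * pi s a * ET P Sbot pi s0 in
  (forall (Qbar lambar : S -> A -> R), (forall s a, 0 <= lambar s a) ->
      lagr P Rw Sbot pi s0 Q lambar <= lagr P Rw Sbot pi s0 Q lampi /\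
      lagr P Rw Sbot pi s0 Q lampi <= lagr P Rw Sbot pi s0 Qbar lampi)
  <->
  [/\ (forall s a, bellman P Rw Sbot Q s a - Q s a <= 0),
      (forall s a, rhopi s * pi s a * (bellman P Rw Sbot Q s a - Q s a) = 0)
    & (forall s, s \notin Sbot -> forall a,
          rhopi s * pi s a * (max_act (Q s) - Q s a) = 0)].
Proof.
case: hELP => [[hP _ _ hs0] [hfin hterm hreach]] lampi.
have lam_maxP := lagr_multiplier_maxP hP hterm hs0 hreach hfin pi rhopi hpi hst Rw Q.
have Q_minP := lagr_Q_minP hP hterm hs0 hreach hfin pi rhopi hpi hst Rw Q.
split => [saddle | [B_le0 slack0 greedy0] Qbar lambar lambar0].
  have [B_le0 slack0] := lam_maxP.1 (fun lambar lambar0 => (saddle Q lambar lambar0).1).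
  split=> //; apply: Q_minP.1 => Qbar.
  exact: (saddle Qbar (fun _ _ => 0) (fun _ _ => lexx 0)).2.
by split; [apply: lam_maxP.2 | apply: Q_minP.2].
Qed.
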